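(* Let $\mathcal{M}$ be a playable coalition model, $w\in W$, $\varphi\in\mathcal{L}_{CL}$, and $C\subseteq D\subseteq N$. Then (1) if $\mathcal{M},w\models\mathrm{FI}_D(\varphi)$ then $\mathcal{M},w\models\mathrm{FI}_C(\varphi)$; (2) if $\mathcal{M},w\models\mathrm{FC}_C(\varphi)$ then $\mathcal{M},w\models\mathrm{FC}_D(\varphi)$.
   Context: Let $N=\{1,\dots,n\}$ be a finite set of agents and $\mathrm{Prop}$ a countable set of atoms. The language $\mathcal{L}_{CL}$ is $\varphi ::= p \mid \neg\varphi \mid (\varphi\wedge\psi)\mid [C]\varphi$ ($p\in\mathrm{Prop}$, $C\subseteq N$). A coalition model is $\mathcal{M}=(W,E,V)$, $W$ nonempty, $E_w(C)\subseteq\mathcal{P}(W)$ for $w\in W$, $C\subseteq N$, $V:\mathrm{Prop}\to\mathcal{P}(W)$; satisfaction is classical for Boolean parts and $\mathcal{M},w\models[C]\varphi$ iff $[\![\varphi]\!]_{\mathcal{M}}=\{u\mid\mathcal{M},u\models\varphi\}\in E_w(C)$. Write $\overline{X}=W\setminus X$. $E_w$ is playable if for all $C,D\subseteq N$, $X,Y\subseteq W$: (i) $\emptyset\notin E_w(C)$; (ii) $W\in E_w(C)$; (iii) if $X\in E_w(C)$ and $X\subseteq Y$ then $Y\in E_w(C)$; (iv) if $C\cap D=\emptyset$, $X\in E_w(C)$, $Y\in E_w(D)$ then $X\cap Y\in E_w(C\cup D)$; (v) $X\notin E_w(\emptyset)$ iff $\overline{X}\in E_w(N)$; the model is playable if each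 $E_w$ is. $\mathrm{FC}_C(\varphi)=[C]\varphi\wedge[C]\neg\varphi$, $\mathrm{FI}_C(\varphi)=\neg[C]\varphi\wedge\neg[C]\neg\varphi$. *)

From mathcomp Require Import all_boot.
Set Implicit Arguments. Unset Strict Implicit. Unset Printing Implicit Defensive.

Inductive form (n : nat) : Type :=
| Atom : nat -> form n
| Neg : form n -> form n
| And : form n -> form n -> form n
| Box : {set 'I_n} -> form n -> form n.

Record cmodel (n : nat) : Type := CModel {
  world : Type;
  inhab : world;
  eff : world -> {set 'I_n} -> (world -> Prop) -> Prop;  (* X \in E_w(C) *)
  val : nat -> world -> Prop
}.
Arguments world {n} M : rename.
Arguments inhab {n} M : rename.
Arguments eff {n} M w C X : rename.
Arguments val {n} M p w : rename.

Fixpoint sat (n : nat) (M : cmodel n) (w : world M) (f : form n) : Prop :=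
  match f with
  | Atom p => val M p w
  | Neg g => ~ @sat n M w g
  | And g h => @sat n M w g /\ @sat n M w h
  | Box C g => eff M w C (fun u => @sat n M u g)
  end.

Definition playable_at (n : nat) (M : cmodel n) (w : world M) : Prop :=
  (forall C, ~ eff M w C (fun _ => False)) /\
  (forall C, eff M w C (fun _ => True)) /\
  (forall C (X Y : world M -> Prop), eff M w C X ->
       (forall u, X u -> Y u) -> eff M w C Y) /\
  (forall C D (X Y : world M -> Prop), C :&: D = set0 ->
       eff M w C X -> eff M w D Y -> eff M w (C :|: D) (fun u => X u /\ Y u)) /\
  (forall X : world M -> Prop,
       ~ eff M w set0 X <-> eff M w setT (fun u => ~ X u)).

Definition playable (n : nat) (M : cmodel n) : Prop :=
  forall w, @playable_at n M w.

Definition FC (n : nat) (C : {set 'I_n}) (f : form n) : form n :=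
  And (Box C f) (Box C (Neg f)).
Definition FI (n : nat) (C : {set 'I_n}) (f : form n) : form n :=
  And (Neg (Box C f)) (Neg (Box C (Neg f))).

From mathcomp Require Import all_boot.

(* Effectivity is monotone in the coalition: D splits into the disjoint
   coalitions C and D \ C, and superadditivity combines C's power to force X
   with D \ C's trivial power to force W.  Both parts of the theorem follow,
   since FC is a conjunction of effectivities and FI one of non-effectivities. *)

Lemma eff_subset_coalition (n : nat) (M : cmodel n) (w : world M)
    (C D : {set 'I_n}) (X : world M -> Prop) :
  playable_at w -> C \subset D -> eff M w C X -> eff M w D X.
Proof.
move=> [_ [effT [eff_mono [eff_superadd _]]]] sCD effCX.
have disjC : C :&: (D :\: C) = set0 by rewrite setIDA setDIl setDv set0I.
have <- : C :|: (D :\: C) = D by rewrite -{2}(setID D C) (setIidPr sCD).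
apply: eff_mono (eff_superadd _ _ _ _ disjC effCX (effT _)) _.
by move=> u [].
Qed.

Theorem mainTheorem13 (n : nat) (M : cmodel n) (w : world M) (f : form n)
    (C D : {set 'I_n}) :
  playable M -> C \subset D ->
  (@sat n M w (FI D f) -> @sat n M w (FI C f)) /\
  (@sat n M w (FC C f) -> @sat n M w (FC D f)).
Proof.
move=> /(_ w) playMw sCD.
have mono X := @eff_subset_coalition n M w C D X playMw sCD.
split=> /= [[notD notDneg] | [effC effCneg]].
- by split=> [/mono | /mono].
- by split; apply: mono.
Qed.
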